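(* Let $E=\{ax^4+by^4+cx^2y^2: a,b,c\in\mathbb{R}\}$, viewed as polynomials on $\ell_\infty^2$ with the sup norm over $[-1,1]^2$. Then $$\sup\{\Phi_{4,2}(P): P\in E,\ \|P\|\le 1\}=\left[2+6\left(\tfrac12\right)^{8/5}\right]^{5/8}\approx 2.371,$$ and this supremum is attained at $P=\pm(x^4+y^4-3x^2y^2)$. In particular $L_{\mathbb{R},4}\ge L_{\mathbb{R},4}(\ell_\infty^2)\ge\left[2+6(1/2)^{8/5}\right]^{5/8}\approx2.371$.
   Context: All spaces are real. $\check P$ denotes the polar of an $m$-homogeneous polynomial $P$ (the unique symmetric $m$-linear form with $\check P(x,\dots,x)=P(x)$). $\ell_\infty^n$ is $\mathbb{R}^n$ with sup norm, and for a polynomial on $\ell_\infty^n$, $\|P\|=\sup_{x\in[-1,1]^n}|P(x)|$. For $P$ $m$-homogeneous on $\ell_\infty^n$, $\Phi_{m,n}(P)=\big(\sum_{i_1,\dots,i_m=1}^n|\check P(e_{i_1},\dots,e_{i_m})|^{\frac{2m}{m+1}}\big)^{\frac{m+1}{2m}}$ and $L_{\mathbb{R},m}(\ell_\infty^n)=\sup\{\Phi_{m,n}(P):\|P\|\le1\}$. For $x_1,\dots,x_N$ in a Banach space $X$, $\|(x_j)\|_{w,1}=\sup\{\sum_j|\varphi(x_j)|:\varphi\in X',\|\varphi\|\le1\}$. $L_{\mathbb{R},m}$ is the smallest constant $L$ such that for every real Banach space $X$, every continuous $m$-homogeneous $P:X\to\mathbb{R}$, every $N$ and all $x^{(k)}_j\in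 X$: $\big(\sum_{j_1,\dots,j_m=1}^N|\check P(x^{(1)}_{j_1},\dots,x^{(m)}_{j_m})|^{\frac{2m}{m+1}}\big)^{\frac{m+1}{2m}}\le L\|P\|\prod_{k=1}^m\|(x^{(k)}_j)_{j=1}^N\|_{w,1}$. *)

From Stdlib Require Import Reals.
Open Scope R_scope.

Definition rpow (t s : R) : R := if Req_EM_T t 0 then 0 else Rpower t s.

(* Points of R^2 = ell_infty^2 are functions x : nat -> R, coordinates x 0, x 1.
   The basis vectors e_1, e_2 are indexed by 0, 1. *)
Definition sum2 (f : nat -> R) : R := f 0%nat + f 1%nat.

(* A 4-linear form on R^2 is given by its values T i j k l = A(e_i,e_j,e_k,e_l),
   i,j,k,l in {0,1}:  A(x1,..,x4) = sum T i j k l x1_i x2_j x3_k x4_l. *)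
Definition form4 (T : nat -> nat -> nat -> nat -> R) (x1 x2 x3 x4 : nat -> R) : R :=
  sum2 (fun i => sum2 (fun j => sum2 (fun k => sum2 (fun l =>
    T i j k l * x1 i * x2 j * x3 k * x4 l)))).

(* Symmetry of the 4-linear form (invariance under adjacent transpositions,
   which generate all permutations), checked on basis vectors. *)
Definition sym4 (T : nat -> nat -> nat -> nat -> R) : Prop :=
  forall i j k l,
    T i j k l = T j i k l /\ T i j k l = T i k j l /\ T i j k l = T i j l k.

(* The 4-homogeneous polynomial P(x) = A(x,x,x,x); if T is symmetric then A is
   the polar of P, i.e. T i j k l = polar(P)(e_i,e_j,e_k,e_l). *)
Definition poly4 (T : nat -> nat -> nat -> nat -> R) (x : nat -> R) : R :=
  form4 T x x x x.

Definition norm_le1 (P : (nat -> R) -> R) : Prop :=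
  forall x : nat -> R, -1 <= x 0%nat <= 1 -> -1 <= x 1%nat <= 1 -> Rabs (P x) <= 1.

Definition Phi42 (T : nat -> nat -> nat -> nat -> R) : R :=
  rpow (sum2 (fun i => sum2 (fun j => sum2 (fun k => sum2 (fun l =>
    rpow (Rabs (T i j k l)) (8/5)))))) (5/8).

Definition in_E (P : (nat -> R) -> R) : Prop :=
  exists a b c : R, forall x : nat -> R,
    P x = a * x 0%nat ^ 4 + b * x 1%nat ^ 4 + c * x 0%nat ^ 2 * x 1%nat ^ 2.

Definition P0 (x : nat -> R) : R :=
  x 0%nat ^ 4 + x 1%nat ^ 4 - 3 * x 0%nat ^ 2 * x 1%nat ^ 2.

Definition Vconst : R := rpow (2 + 6 * rpow (1/2) (8/5)) (5/8).

(* On E the polar coefficients are T_0000 = a, T_1111 = b, T_0011 = c/6 and all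
   the others vanish, so Phi_{4,2}(P)^{8/5} = |a|^{8/5} + |b|^{8/5} + 6|c/6|^{8/5}.
   Evaluating P at (1,0), (0,1) and (1,1) gives |a|, |b|, |a+b+c| <= 1, hence
   |c| <= 3, which bounds Phi_{4,2}(P) by [2 + 6 (1/2)^{8/5}]^{5/8}.  The bound is
   reached by x^4 + y^4 - 3x^2y^2, whose sup norm on the square is 1. *)
From Pilot Require Import Defs.
From Stdlib Require Import Reals Lra Lia Psatz.
Open Scope R_scope.

Lemma rpow_ge0 t s : 0 <= rpow t s.
Proof.
  unfold rpow; destruct (Req_EM_T t 0); [lra | left; apply exp_pos].
Qed.

Lemma rpow0 s : rpow 0 s = 0.
Proof. unfold rpow; destruct (Req_EM_T 0 0); lra. Qed.

Lemma rpow1 s : rpow 1 s = 1.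
Proof.
  unfold rpow; destruct (Req_EM_T 1 0); [lra|].
  unfold Rpower; rewrite ln_1, Rmult_0_r; apply exp_0.
Qed.

Lemma rpow_le x y s : 0 <= s -> 0 <= x <= y -> rpow x s <= rpow y s.
Proof.
  intros Hs Hxy; unfold rpow at 1; destruct (Req_EM_T x 0).
  - apply rpow_ge0.
  - unfold rpow; destruct (Req_EM_T y 0); [lra|].
    apply Rle_Rpower_l; lra.
Qed.

Lemma rpow_le1 x s : 0 <= s -> Rabs x <= 1 -> rpow (Rabs x) s <= 1.
Proof.
  intros Hs Hx; rewrite <- (rpow1 s).
  apply rpow_le; [exact Hs | split; [apply Rabs_pos | exact Hx]].
Qed.

Lemma Rabs_le_inv x a : Rabs x <= a -> -a <= x <= a.
Proof. unfold Rabs; destruct Rcase_abs; lra. Qed.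

Definition pt (u v : R) : nat -> R := fun n => if Nat.eqb n 0 then u else v.

Section SymmetricForm.
Variable T : nat -> nat -> nat -> nat -> R.
Hypothesis HT : sym4 T.

Lemma sym4_coef_eqs :
  T 0 0 1 0 = T 0 0 0 1 /\ T 0 1 0 0 = T 0 0 0 1 /\ T 1 0 0 0 = T 0 0 0 1 /\
  T 0 1 0 1 = T 0 0 1 1 /\ T 0 1 1 0 = T 0 0 1 1 /\ T 1 0 0 1 = T 0 0 1 1 /\
  T 1 0 1 0 = T 0 0 1 1 /\ T 1 1 0 0 = T 0 0 1 1 /\
  T 1 0 1 1 = T 0 1 1 1 /\ T 1 1 0 1 = T 0 1 1 1 /\ T 1 1 1 0 = T 0 1 1 1.
Proof.
  destruct (HT 0%nat 0%nat 0%nat 1%nat) as (_ & _ & e1).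
  destruct (HT 0%nat 0%nat 1%nat 0%nat) as (_ & e2 & _).
  destruct (HT 0%nat 1%nat 0%nat 0%nat) as (e3 & _ & _).
  destruct (HT 0%nat 0%nat 1%nat 1%nat) as (_ & e4 & _).
  destruct (HT 0%nat 1%nat 0%nat 1%nat) as (e5 & _ & e6).
  destruct (HT 0%nat 1%nat 1%nat 0%nat) as (e7 & _ & _).
  destruct (HT 1%nat 0%nat 0%nat 1%nat) as (_ & _ & e8).
  destruct (HT 1%nat 0%nat 1%nat 0%nat) as (_ & e9 & _).
  destruct (HT 0%nat 1%nat 1%nat 1%nat) as (e10 & _ & _).
  destruct (HT 1%nat 0%nat 1%nat 1%nat) as (_ & e11 & _).
  destruct (HT 1%nat 1%nat 0%nat 1%nat) as (_ & _ & e12).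
  repeat split; congruence.
Qed.

Lemma poly4_sym4 x : poly4 T x =
  T 0 0 0 0 * x 0%nat ^ 4 + 4 * T 0 0 0 1 * x 0%nat ^ 3 * x 1%nat
  + 6 * T 0 0 1 1 * x 0%nat ^ 2 * x 1%nat ^ 2 + 4 * T 0 1 1 1 * x 0%nat * x 1%nat ^ 3
  + T 1 1 1 1 * x 1%nat ^ 4.
Proof.
  destruct sym4_coef_eqs as (e1 & e2 & e3 & e4 & e5 & e6 & e7 & e8 & e9 & e10 & e11).
  unfold poly4, Defs.form4, sum2.
  rewrite e1, e2, e3, e4, e5, e6, e7, e8, e9, e10, e11; ring.
Qed.

Lemma Phi42_sym4 : Phi42 T =
  rpow (rpow (Rabs (T 0 0 0 0)) (8/5) + rpow (Rabs (T 1 1 1 1)) (8/5)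
        + 6 * rpow (Rabs (T 0 0 1 1)) (8/5) + 4 * rpow (Rabs (T 0 0 0 1)) (8/5)
        + 4 * rpow (Rabs (T 0 1 1 1)) (8/5)) (5/8).
Proof.
  destruct sym4_coef_eqs as (e1 & e2 & e3 & e4 & e5 & e6 & e7 & e8 & e9 & e10 & e11).
  unfold Phi42, sum2.
  rewrite e1, e2, e3, e4, e5, e6, e7, e8, e9, e10, e11; f_equal; ring.
Qed.

Lemma sym4_coef_E a b c :
  (forall x, poly4 T x = a * x 0%nat ^ 4 + b * x 1%nat ^ 4 + c * x 0%nat ^ 2 * x 1%nat ^ 2) ->
  T 0 0 0 0 = a /\ T 1 1 1 1 = b /\ T 0 0 1 1 = c / 6 /\ T 0 0 0 1 = 0 /\ T 0 1 1 1 = 0.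
Proof.
  intros H.
  pose proof (H (pt 1 0)) as h1; pose proof (H (pt 0 1)) as h2.
  pose proof (H (pt 1 1)) as h3; pose proof (H (pt 1 (-1))) as h4.
  pose proof (H (pt 2 1)) as h5; pose proof (H (pt 2 (-1))) as h6.
  rewrite poly4_sym4 in h1, h2, h3, h4, h5, h6.
  unfold pt in h1, h2, h3, h4, h5, h6; simpl in h1, h2, h3, h4, h5, h6.
  repeat split; lra.
Qed.

Lemma Phi42_sym4_E a b c :
  (forall x, poly4 T x = a * x 0%nat ^ 4 + b * x 1%nat ^ 4 + c * x 0%nat ^ 2 * x 1%nat ^ 2) ->
  Phi42 T = rpow (rpow (Rabs a) (8/5) + rpow (Rabs b) (8/5)
                  + 6 * rpow (Rabs (c / 6)) (8/5)) (5/8).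
Proof.
  intros H; rewrite Phi42_sym4.
  destruct (sym4_coef_E a b c H) as (-> & -> & -> & -> & ->).
  rewrite Rabs_R0, rpow0; f_equal; ring.
Qed.

End SymmetricForm.

Lemma norm_le1_E_coef a b c :
  norm_le1 (fun x => a * x 0%nat ^ 4 + b * x 1%nat ^ 4 + c * x 0%nat ^ 2 * x 1%nat ^ 2) ->
  Rabs a <= 1 /\ Rabs b <= 1 /\ Rabs (c / 6) <= 1/2.
Proof.
  intros Hn.
  pose proof (Hn (pt 1 0) ltac:(cbv [pt]; simpl; lra) ltac:(cbv [pt]; simpl; lra)) as n1.
  pose proof (Hn (pt 0 1) ltac:(cbv [pt]; simpl; lra) ltac:(cbv [pt]; simpl; lra)) as n2.
  pose proof (Hn (pt 1 1) ltac:(cbv [pt]; simpl; lra) ltac:(cbv [pt]; simpl; lra)) as n3.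
  unfold pt in n1, n2, n3; simpl in n1, n2, n3.
  apply Rabs_le_inv in n1, n2, n3.
  repeat split; apply Rabs_le; lra.
Qed.

Lemma Phi42_E_le T : sym4 T -> in_E (poly4 T) -> norm_le1 (poly4 T) -> Phi42 T <= Vconst.
Proof.
  intros HT [a [b [c Hx]]] Hn.
  assert (Hn' : norm_le1 (fun x => a * x 0%nat ^ 4 + b * x 1%nat ^ 4
                                   + c * x 0%nat ^ 2 * x 1%nat ^ 2)).
  { intros x h0 h1; rewrite <- Hx; exact (Hn x h0 h1). }
  destruct (norm_le1_E_coef a b c Hn') as (ha & hb & hc).
  rewrite (Phi42_sym4_E T HT a b c Hx); unfold Vconst.
  pose proof (rpow_le1 a (8/5) ltac:(lra) ha).
  pose proof (rpow_le1 b (8/5) ltac:(lra) hb).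
  pose proof (rpow_le (Rabs (c / 6)) (1/2) (8/5) ltac:(lra) (conj (Rabs_pos _) hc)).
  pose proof (rpow_ge0 (Rabs a) (8/5)); pose proof (rpow_ge0 (Rabs b) (8/5)).
  pose proof (rpow_ge0 (Rabs (c / 6)) (8/5)).
  apply rpow_le; lra.
Qed.

Lemma P0_bound x : -1 <= x 0%nat <= 1 -> -1 <= x 1%nat <= 1 -> Rabs (P0 x) <= 1.
Proof.
  intros h0 h1; unfold P0.
  set (u := x 0%nat ^ 2); set (v := x 1%nat ^ 2).
  assert (0 <= u <= 1) by (unfold u; split; nra).
  assert (0 <= v <= 1) by (unfold v; split; nra).
  replace (x 0%nat ^ 4) with (u * u) by (unfold u; ring).
  replace (x 1%nat ^ 4) with (v * v) by (unfold v; ring).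
  replace (3 * x 0%nat ^ 2 * x 1%nat ^ 2) with (3 * u * v) by (unfold u, v; ring).
  (* u^2 + v^2 - 3uv = (u - v)^2 - uv >= -uv >= -1, and <= max(u,v)^2 <= 1 *)
  apply Rabs_le; split.
  - pose proof (pow2_ge_0 (u - v)); nra.
  - destruct (Rle_dec u v); nra.
Qed.

(* Polar coefficients of s * P0, indexed by the number of ones among i, j, k, l. *)
Definition T0 (s : R) (i j k l : nat) : R :=
  match (i + j + k + l)%nat with 0%nat => s | 2%nat => - s / 2 | 4%nat => s | _ => 0 end.

Lemma T0_sym4 s : sym4 (T0 s).
Proof.
  intros i j k l; unfold T0; repeat split;
    [ replace (j + i + k + l)%nat with (i + j + k + l)%nat by lia
    | replace (i + k + j + l)%nat with (i + j + k + l)%nat by lia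
    | replace (i + j + l + k)%nat with (i + j + k + l)%nat by lia ];
    reflexivity.
Qed.

Lemma poly4_T0 s x : poly4 (T0 s) x = s * P0 x.
Proof. unfold poly4, Defs.form4, sum2, T0, P0; simpl; field. Qed.

Lemma P0_extremal s T : (s = 1 \/ s = -1) -> sym4 T -> (forall x, poly4 T x = s * P0 x) ->
  norm_le1 (poly4 T) /\ Phi42 T = Vconst.
Proof.
  intros Hs HT H.
  assert (Hs1 : Rabs s = 1) by (destruct Hs; subst; unfold Rabs; destruct Rcase_abs; lra).
  split.
  - intros x h0 h1; rewrite H, Rabs_mult, Hs1, Rmult_1_l; apply P0_bound; auto.
  - rewrite (Phi42_sym4_E T HT s s (-3 * s)) by (intros x; rewrite H; unfold P0; ring).
    replace (Rabs (-3 * s / 6)) with (1/2)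
      by (destruct Hs; subst; unfold Rabs; destruct Rcase_abs; lra).
    rewrite Hs1, rpow1; unfold Vconst; f_equal; ring.
Qed.

Theorem mainTheorem3 :
  (* sup { Phi_{4,2}(P) : P in E, ||P|| <= 1 } = Vconst *)
  is_lub (fun r => exists T, sym4 T /\ in_E (poly4 T) /\ norm_le1 (poly4 T)
                             /\ r = Phi42 T) Vconst
  (* attained at P = x^4 + y^4 - 3x^2y^2 and at its negative *)
  /\ (forall s : R, (s = 1 \/ s = -1) ->
        (exists T, sym4 T /\ forall x, poly4 T x = s * P0 x)
        /\ (forall T, sym4 T -> (forall x, poly4 T x = s * P0 x) ->
              norm_le1 (poly4 T) /\ Phi42 T = Vconst))
  (* L_{R,4}(ell_infty^2) >= Vconst: every upper bound of Phi_{4,2} over the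
     unit ball of 4-homogeneous polynomials on ell_infty^2 is >= Vconst *)
  /\ (forall L : R,
        (forall T, sym4 T -> norm_le1 (poly4 T) -> Phi42 T <= L) ->
        Vconst <= L).
Proof.
  destruct (P0_extremal 1 (T0 1) (or_introl eq_refl) (T0_sym4 1) (poly4_T0 1))
    as [Hnorm HPhi].
  split; [split|split].
  - intros r (T & HT & HE & Hn & ->); exact (Phi42_E_le T HT HE Hn).
  - intros L HL; rewrite <- HPhi; apply HL.
    exists (T0 1); split; [apply T0_sym4 | split; [| split; [exact Hnorm | reflexivity]]].
    exists 1, 1, (-3); intros x; rewrite poly4_T0; unfold P0; ring.
  - intros s Hs; split.
    + exists (T0 s); split; [apply T0_sym4 | apply poly4_T0].
    + intros T HT H; exact (P0_extremal s T Hs HT H).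
  - intros L HL; rewrite <- HPhi; apply HL; [apply T0_sym4 | exact Hnorm].
Qed.
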